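(* Let $\psi:\mathcal{Q}\to\mathcal{P}$ be a full upper semilattice morphism with $\mathcal{P},\mathcal{Q}$ finite and $\uparrow\psi(\mathcal{Q})=\mathcal{P}$, and let $S\subseteq\mathcal{P}$ be a spread. If $\min S\subseteq\psi(\mathcal{Q})$ and $\operatorname{cover}S\subseteq\psi(\mathcal{Q})$, then $\mathbb{k}_S\cong\mathrm{Lan}_\psi(\mathbb{k}_{\lfloor S\rfloor_\psi})$ in $\operatorname{rep}\mathcal{P}$; in particular $\mathbb{k}_S$ is in the essential image of $\mathrm{Lan}_\psi$.
   Context: Fix a field $\mathbb{k}$. Upper semilattices have joins of finite nonempty subsets; $\psi$ full means $\psi(q)\le\psi(q')\Rightarrow q\le q'$; upper semilattice morphisms preserve such joins. $\uparrow X=\{p:\exists x\in X,x\le p\}$; $\operatorname{cover}X=\min(\uparrow X\setminus X)$. A spread is a nonempty convex zigzag-connected subset; $\mathbb{k}_S$ is the indicator representation of a convex set $S$. $\lfloor p\rfloor_\psi=\bigvee\{q\in\mathcal{Q}:\psi(q)\le p\}$ and $\lfloor S\rfloor_\psi=\{\lfloor s\rfloor_\psi: s\in S\}$. $\mathrm{Lan}_\psi:\operatorname{rep}\mathcal{Q}\to\operatorname{rep}\mathcal{P}$ is the left adjoint of restriction along $\psi$, given by $N\mapsto N\circ\lfloor-\rfloor_\psi$; $\operatorname{rep}$ of a finite poset is the category of functors to finite-dimensional vector spaces. *)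

From HB Require Import structures.
From mathcomp Require Import all_boot all_order all_algebra.
Set Implicit Arguments.
Unset Strict Implicit.
Unset Printing Implicit Defensive.
Import Order.Theory GRing.Theory.
Local Open Scope order_scope.

Section Poset.
Context {d : Order.disp_t} {T : finPOrderType d}.

Definition upset (X : {set T}) : {set T} := [set p | [exists x in X, x <= p]].

Definition minimals (X : {set T}) : {set T} :=
  [set x in X | [forall y in X, (y <= x) ==> (y == x)]].

Definition cover_set (X : {set T}) : {set T} := minimals (upset X :\: X).

Definition convex (S : {set T}) : Prop :=
  forall x y z, x \in S -> z \in S -> x <= y -> y <= z -> y \in S.

Definition zigzag_connected (S : {set T}) : Prop :=
  forall x y, x \in S -> y \in S ->
    exists s : seq T, [/\ path (fun a b : T => a >=< b) x s,
                          all (fun a => a \in S) s & last x s = y].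

Definition spread (S : {set T}) : Prop :=
  S != set0 /\ convex S /\ zigzag_connected S.
End Poset.

(* A representation: finite dimension at each point, and a matrix for each pair
   (acting on row vectors, x |-> x *m rmap p q), relevant for p <= q. *)
Record repdata (k : fieldType) (d : Order.disp_t) (T : finPOrderType d) := RepData {
  rdim : T -> nat;
  rmap : forall p q : T, 'M[k]_(rdim p, rdim q) }.

Section Reps.
Context {k : fieldType} {d : Order.disp_t} {T : finPOrderType d}.

Definition is_rep (R : repdata k T) : Prop :=
  (forall p, rmap R p p = 1%:M%R) /\
  (forall p q r, p <= q -> q <= r -> (rmap R p q *m rmap R q r = rmap R p r)%R).

Definition rep_iso (R1 R2 : repdata k T) : Prop :=
  exists (f : forall p, 'M[k]_(rdim R1 p, rdim R2 p))
         (g : forall p, 'M[k]_(rdim R2 p, rdim R1 p)),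
    (forall p, (f p *m g p = 1%:M)%R /\ (g p *m f p = 1%:M)%R) /\
    (forall p q, p <= q -> (rmap R1 p q *m f q = f p *m rmap R2 p q)%R).

Definition indicator (S : {set T}) : repdata k T :=
  @RepData k d T (fun p => nat_of_bool (p \in S))
    (fun p q => (\matrix_(i, j) (if (p \in S) && (q \in S) then 1 else 0))%R).
End Reps.

Arguments indicator k {d T} S.

Section Floor.
Context {dP dQ : Order.disp_t}
        {P : finJoinSemilatticeType dP} {Q : finJoinSemilatticeType dQ}.
Variables (psi : Q -> P) (q0 : Q).

(* ⌊p⌋_psi = join of {q : psi q <= p}; q0 is only a default for the empty
   case, which never occurs when ↑psi(Q) = P. *)
Definition floor (p : P) : Q :=
  let s := [seq q <- enum Q | psi q <= p] in
  foldr (fun a b => a `|` b) (head q0 s) (behead s).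

Definition floor_set (S : {set P}) : {set Q} := [set floor s | s in S].

Definition Lan {k : fieldType} (N : repdata k Q) : repdata k P :=
  @RepData k dP P (fun p => rdim N (floor p)) (fun p q => rmap N (floor p) (floor q)).
End Floor.

(* If p lies in S then trivially ⌊p⌋ ∈ ⌊S⌋.  Conversely, ψ⌊s⌋ ∈ S for every
   s ∈ S: it lies between s and a minimal element ψ(m) ≤ s of S, and m ≤ ⌊s⌋
   by fullness.  So if ⌊p⌋ = ⌊s⌋ but p ∉ S, then p ∈ ↑S \ S lies above some
   c = ψ(q) ∈ cover S; now q ≤ ⌊p⌋ gives c ≤ ψ⌊p⌋ ∈ S, and c lies above an
   element of S, so convexity forces c ∈ S, a contradiction.  Hence
   p ∈ S ⟺ ⌊p⌋ ∈ ⌊S⌋, i.e. Lan_ψ k_⌊S⌋ = k_⌊S⌋ ∘ ⌊-⌋ has exactly the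
   dimensions and structure maps of k_S, and the identity matrices give the
   isomorphism. *)
From HB Require Import structures.
From mathcomp Require Import all_boot all_order all_algebra.
Import Order.Theory.
Local Open Scope order_scope.

Lemma ord_boolP {b : bool} (i : 'I_(nat_of_bool b)) : b.
Proof. by case: b i => -[]. Qed.

Lemma ord_bool_eq {b : bool} (i j : 'I_(nat_of_bool b)) : i == j.
Proof. by case: b i j => -[[]//] ? [[]//]. Qed.

Definition bool_ord {b : bool} (hb : b) : 'I_(nat_of_bool b) :=
  Ordinal (etrans (lt0b b) hb).

Lemma mulmx_bool_mxE {R : pzSemiRingType} {m n : nat} {b : bool} (hb : b)
    (A : 'M[R]_(m, nat_of_bool b)) (B : 'M[R]_(nat_of_bool b, n)) i j :
  (A *m B)%R i j = (A i (bool_ord hb) * B (bool_ord hb) j)%R.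
Proof.
rewrite mxE (bigD1 (bool_ord hb)) //= big1 ?GRing.addr0 // => l.
by rewrite ord_bool_eq.
Qed.

Lemma indicator_rep (k : fieldType) (d : Order.disp_t) (T : finPOrderType d)
    (S : {set T}) :
  convex S -> is_rep (indicator k S).
Proof.
move=> convS; split=> [p | p q r le_pq le_qr]; apply/matrixP => i j.
  by rewrite !mxE (ord_boolP i) ord_bool_eq.
have pS : p \in S := ord_boolP i.
have rS : r \in S := ord_boolP j.
have qS : q \in S := convS _ _ _ pS rS le_pq le_qr.
by rewrite (mulmx_bool_mxE qS) !mxE pS qS rS GRing.mulr1.
Qed.

Lemma ex_minimal_le {d : Order.disp_t} {T : finPOrderType d} {X : {set T}} {x : T} :
  x \in X -> exists2 m, m \in minimals X & m <= x.
Proof.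
move=> xX; pose below y := [set z in X | z <= y].
have xB : x \in below x by rewrite /below inE xX lexx.
case: (arg_minnP (fun y => #|below y|) xB) => m mB mmin.
have /[!inE] /andP[mX mx] : m \in below x := mB.
exists m => //; rewrite inE mX; apply/forallP => y; apply/implyP => yX.
apply/implyP => ym.
have sub_ym : below y \subset below m.
  by apply/subsetP => z; rewrite /below !inE => /andP[-> zy]; apply: le_trans zy ym.
have yB : y \in below x by rewrite /below inE yX (le_trans ym mx).
have /eqP eq_ym : below y == below m by rewrite eqEcard sub_ym mmin.
have : m \in below y by rewrite eq_ym /below inE mX lexx.
by rewrite /below inE eq_le ym => /andP[_ ->].
Qed.

Lemma foldr_join_le (d : Order.disp_t) (T : joinSemilatticeType d) (a x : T) s :
  (foldr (fun a b => a `|` b) a s <= x) = (a <= x) && all (fun y => y <= x) s.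
Proof. by elim: s => [|b s IH] /=; rewrite ?andbT // leUx IH andbCA. Qed.

Section Floor.
Context {dP dQ : Order.disp_t}
        {P : finJoinSemilatticeType dP} {Q : finJoinSemilatticeType dQ}.
Variables (psi : Q -> P) (q0 : Q).
Hypothesis psiU : forall x y : Q, psi (x `|` y) = psi x `|` psi y.
Hypothesis psi_full : forall q q' : Q, psi q <= psi q' -> q <= q'.
Hypothesis upset_psi : upset (psi @: [set: Q]) = [set: P].

Local Notation floor := (floor psi q0).
Local Notation floor_set := (floor_set psi q0).

Lemma psi_mono {x y : Q} : x <= y -> psi x <= psi y.
Proof. by move=> /join_idPr <-; rewrite psiU leUl. Qed.

Lemma psi_foldr_join a s :
  psi (foldr (fun a b => a `|` b) a s) = foldr (fun a b => a `|` b) (psi a) (map psi s).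
Proof. by elim: s => [|b s IH] //=; rewrite psiU IH. Qed.

Lemma floor_ge q p : psi q <= p -> q <= floor p.
Proof.
move=> le_qp; rewrite /floor.
have : q \in [seq q <- enum Q | psi q <= p] by rewrite mem_filter mem_enum andbT.
case: [seq q <- enum Q | psi q <= p] => [//|a s] qs /=.
have /allP : all (fun y => y <= foldr (fun a b => a `|` b) a s) (a :: s).
  by rewrite /= -foldr_join_le lexx.
exact.
Qed.

Lemma psi_floor_le p : psi (floor p) <= p.
Proof.
have : p \in upset (psi @: [set: Q]) by rewrite upset_psi inE.
rewrite inE => /existsP[_ /andP[/imsetP[q _ ->] le_qp]].
have : q \in [seq q <- enum Q | psi q <= p] by rewrite mem_filter mem_enum andbT.
have : all (fun q => psi q <= p) [seq q <- enum Q | psi q <= p] by apply: filter_all.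
rewrite /floor; case: [seq q <- enum Q | psi q <= p] => [//|a s] /= /andP[le_ap le_sp] _.
by rewrite psi_foldr_join foldr_join_le le_ap all_map.
Qed.

Lemma floor_psi q : floor (psi q) = q.
Proof. by apply/le_anti; rewrite floor_ge // andbT psi_full ?psi_floor_le. Qed.

Variable S : {set P}.
Hypothesis convS : convex S.
Hypothesis minS_psi : minimals S \subset psi @: [set: Q].
Hypothesis coverS_psi : cover_set S \subset psi @: [set: Q].

Lemma psi_min_le_floor {s} :
  s \in S -> exists2 q, psi q \in S & q <= floor s.
Proof.
move=> sS; have [m minm le_ms] := ex_minimal_le sS.
have /imsetP[q _ m_eq] := subsetP minS_psi m minm.
exists q; last by apply: floor_ge; rewrite -m_eq.
by move: minm; rewrite inE m_eq => /andP[].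
Qed.

Lemma psi_floor_in s : s \in S -> psi (floor s) \in S.
Proof.
move=> sS; have [q qS le_q] := psi_min_le_floor sS.
exact: convS _ _ _ qS sS (psi_mono le_q) (psi_floor_le s).
Qed.

Lemma mem_floor_set p : (floor p \in floor_set S) = (p \in S).
Proof.
apply/idP/idP => [/imsetP[s sS floor_eq] | pS]; last by apply/imsetP; exists p.
have fS : psi (floor p) \in S by rewrite floor_eq psi_floor_in.
apply/negPn/negP => pNS.
have pX : p \in upset S :\: S.
  by rewrite !inE pNS; apply/existsP; exists (psi (floor p)); rewrite fS psi_floor_le.
have [c cover_c le_cp] := ex_minimal_le pX.
have /imsetP[q _ c_eq] := subsetP coverS_psi c cover_c.
have le_c : c <= psi (floor p) by rewrite c_eq psi_mono // floor_ge -?c_eq.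
move: cover_c; rewrite !inE => /andP[/andP[cNS /existsP[x /andP[xS le_xc]]] _].
by move/negP: cNS; apply; apply: convS _ _ _ xS fS le_xc le_c.
Qed.

Lemma floor_set_convex : convex (floor_set S).
Proof.
move=> _ y _ /imsetP[s sS ->] /imsetP[t tS ->] le_sy le_yt.
apply/imsetP; exists (psi y); last by rewrite floor_psi.
have [q qS le_q] := psi_min_le_floor sS.
apply: (convS _ _ _ qS tS) (psi_mono (le_trans le_q le_sy)) _.
exact: le_trans (psi_mono le_yt) (psi_floor_le t).
Qed.

End Floor.

Lemma indicator_Lan_iso (k : fieldType) (dP dQ : Order.disp_t)
    (P : finJoinSemilatticeType dP) (Q : finJoinSemilatticeType dQ)
    (psi : Q -> P) (q0 : Q) (S : {set P}) (F : {set Q}) :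
  (forall p, (floor psi q0 p \in F) = (p \in S)) ->
  rep_iso (indicator k S) (Lan psi q0 (indicator k F)).
Proof.
move=> memF; exists (fun=> const_mx 1%R), (fun=> const_mx 1%R).
split=> [p | p q le_pq]; first split; apply/matrixP => i j.
- have pS : p \in S := ord_boolP i.
  have fF : floor psi q0 p \in F by rewrite memF.
  by rewrite (mulmx_bool_mxE fF) !mxE ord_bool_eq GRing.mulr1.
- have fF : floor psi q0 p \in F := ord_boolP i.
  have pS : p \in S by rewrite -memF.
  by rewrite (mulmx_bool_mxE pS) !mxE ord_bool_eq GRing.mulr1.
- have pS : p \in S := ord_boolP i.
  have fqF : floor psi q0 q \in F := ord_boolP j.
  have qS : q \in S by rewrite -memF.
  have fpF : floor psi q0 p \in F by rewrite memF.
  by rewrite (mulmx_bool_mxE qS) (mulmx_bool_mxE fpF) !mxE pS qS fpF fqF.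
Qed.

Theorem mainTheorem14 (k : fieldType) (dP dQ : Order.disp_t)
  (P : finJoinSemilatticeType dP) (Q : finJoinSemilatticeType dQ)
  (psi : Q -> P) (q0 : Q)
  (Hmorph : forall x y : Q, psi (x `|` y) = psi x `|` psi y)
  (Hfull : forall q q' : Q, psi q <= psi q' -> q <= q')
  (Hup : upset (psi @: [set: Q]) = [set: P])
  (S : {set P}) (HS : spread S)
  (Hmin : minimals S \subset psi @: [set: Q])
  (Hcov : cover_set S \subset psi @: [set: Q]) :
  is_rep (indicator k (floor_set psi q0 S)) /\
  rep_iso (indicator k S) (Lan psi q0 (indicator k (floor_set psi q0 S))).
Proof.
case: HS => _ [convS _]; split.
  exact/indicator_rep/floor_set_convex.
exact/indicator_Lan_iso/mem_floor_set.
Qed.
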